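(* Let $\mathbb{K}$ be a field of characteristic not $2$, $E$ an $n$-dimensional $\mathbb{K}$-vector space with $n\geq 2$, and $\mathcal{V}$ a linear subspace of $\mathcal{L}(E)$ such that every $u\in\mathcal{V}$ has at most two distinct eigenvalues in $\mathbb{K}$; if $n=2$, assume moreover that every $u\in\mathcal{V}$ has at most one nonzero eigenvalue in $\mathbb{K}$. Then for every $2$-complex $(E_1,\dots,E_n)$ of $E$, there exists a $\mathcal{V}$-good vector not belonging to $E_1\cup\cdots\cup E_n$.
   Context: A $2$-complex of $E$ is an $n$-tuple $(E_i)_{1\leq i\leq n}$ of linear subspaces of $E$ with $\dim E_i=\lfloor (i+1)/2\rfloor$ for all $i$. A nonzero vector $x\in E$ is $\mathcal{V}$-good if there is no $u\in\mathcal{V}$ with $\operatorname{im}u=\mathbb{K}x$ and $\operatorname{tr}(u)=0$. *)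

(* E = 'rV[K]_n (row vectors); L(E) = 'M[K]_n, where a matrix
   u acts on row vectors by x |-> x *m u, so im u is the row space of u. *)
From HB Require Import structures.
From mathcomp Require Import all_boot all_order all_algebra.
Set Implicit Arguments. Unset Strict Implicit. Unset Printing Implicit Defensive.
Import Order.TTheory GRing.Theory Num.Theory.
Local Open Scope ring_scope.

Definition at_most_two_eigenvalues (K : fieldType) (n : nat) (u : 'M[K]_n) : Prop :=
  forall a b c : K, eigenvalue u a -> eigenvalue u b -> eigenvalue u c ->
    a = b \/ a = c \/ b = c.

Definition at_most_one_nonzero_eigenvalue (K : fieldType) (n : nat) (u : 'M[K]_n) : Prop :=
  forall a b : K, a != 0 -> b != 0 -> eigenvalue u a -> eigenvalue u b -> a = b.

Definition two_complex (K : fieldType) (n : nat) (Es : nat -> {vspace 'rV[K]_n}) : Prop :=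
  forall i, (1 <= i <= n)%N -> \dim (Es i) = ((i + 1) %/ 2)%N.

Definition good (K : fieldType) (n : nat) (V : {vspace 'M[K]_n}) (x : 'rV[K]_n) : Prop :=
  x != 0 /\ ~ (exists u : 'M[K]_n, [/\ u \in V, (u == x)%MS & \tr u = 0]).

From HB Require Import structures.
From mathcomp Require Import all_boot all_order all_algebra.
From mathcomp Require Import zify.
From Stdlib Require Import Classical ClassicalEpsilon.
Set Implicit Arguments. Unset Strict Implicit. Unset Printing Implicit Defensive.
Import Order.TTheory GRing.Theory Num.Theory.

(* A nonzero x is not V-good iff V contains D *m x for a column D != 0 with
   x *m D = 0 (a trace-zero operator with image K x); such a D is a witness.
   1. Counting: a union bound, and total_relation_outdegree: a relation total
      on a finite set S gives some element more than |S|/2 successors in S.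
      Numeric estimates for the grid {0,1,-1}.
   2. Rank-one algebra: by the eigenvalue hypotheses, bad vectors x, y with
      witnesses Dx, Dy satisfy y *m Dx = 0 or x *m Dy = 0 (witness_pair);
      otherwise a combination M of Dx *m x and Dy *m y in V swaps x and y,
      hence has eigenvalues 1 and -1, and also 0 when n >= 3 since
      rank M <= 2.
   3. Subspaces: a d-dimensional subspace is determined by d coordinates;
      hyperplanes x *m D = 0 have dimension n - 1.
   4. Grid counting on g^n, for g injective with t values including 0: a
      d-dimensional subspace holds at most t^d grid points.  If all grid
      points outside the complex were bad, "f' lies in the hyperplane of the
      witness of f" would be total on them, while each such hyperplane holds
      at most t^(n-1) grid points, at least r of them in the complex.
   5. The theorem: the grid {0,1,-1} with r = 1 when n <> 3; for n = 3 the
      grid {0,1,-1,a} if K has a fourth element a, and otherwise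
      K = {0,1,-1}, where every hyperplane meets the plane E_3 in three grid
      points (r = 3). *)

Section Counting.
Variable T : finType.

Lemma card_bigcup_le (I : Type) (r : seq I) (P : pred I) (A : I -> {set T}) :
  #|\bigcup_(i <- r | P i) A i| <= \sum_(i <- r | P i) #|A i|.
Proof.
elim/big_rec2: _ => [|i m U _ le_U_m]; first by rewrite cards0.
by rewrite (leq_trans (leq_card_setU _ _).1) ?leq_add2l.
Qed.

Lemma card_sep (S : {set T}) (p : pred T) : #|[set y in S | p y]| = \sum_(y in S) p y.
Proof.
rewrite -sum1_card (eq_bigl (fun y => (y \in S) && p y)) => [|y]; last by rewrite inE.
by rewrite big_mkcondr; apply: eq_bigr => y _; case: (p y).
Qed.

(* If any two elements of a nonempty S are related in at least one direction,
   double counting the related pairs gives some element with more than |S|/2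
   successors in S. *)
Lemma total_relation_outdegree (S : {set T}) (R : rel T) (m : nat) :
  {in S &, forall x y, R x y || R y x} ->
  {in S, forall x, #|[set y in S | R x y]| <= m} ->
  S != set0 -> #|S| < 2 * m.
Proof.
move=> R_total outdeg S_neq0.
pose N := \sum_(x in S) \sum_(y in S) R x y.
have N_le : N <= #|S| * m.
  by rewrite -sum_nat_const; apply: leq_sum => x xS; rewrite -card_sep outdeg.
have N_ge : #|S| * #|S| + #|S| <= 2 * N.
  have -> : 2 * N = \sum_(x in S) \sum_(y in S) (R x y + R y x).
    rewrite mul2n -addnn {2}/N exchange_big -big_split /=.
    by apply: eq_bigr => x _; rewrite -big_split.
  rewrite -mulnSr -sum_nat_const; apply: leq_sum => x xS.
  have -> : #|S|.+1 = \sum_(y in S) (1 + (x == y)).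
    rewrite big_split sum1_card /= (bigD1 x) //= eqxx big1 ?addn1 //.
    by move=> y /andP[_ /negPf]; rewrite eq_sym => ->.
  apply: leq_sum => y yS; have := R_total x y xS yS.
  by have [<-|_] := eqVneq x y; [rewrite orbb => -> | case: (R x y); case: (R y x)].
have S_gt0 : 0 < #|S| by rewrite card_gt0.
nia.
Qed.
End Counting.

(* Sizes of the subspaces of a 2-complex, on the grid {0,1,-1}: their total
   is dominated by the grid points of a hyperplane. *)
Lemma sum_pow_half_le m : \sum_(i < m.+4) 3 ^ (i.+2 %/ 2) <= 3 ^ m.+3.
Proof.
elim: m => [|m IH]; first by rewrite !big_ord_recr big_ord0.
rewrite big_ord_recr /= expnS.
have last_le : 3 ^ (m.+4.+2 %/ 2) <= 3 ^ m.+3.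
  by rewrite leq_exp2l //; have := leq_divM m.+4.+2 2; lia.
by apply: leq_trans (leq_add IH last_le) _; rewrite mulSn leq_add2l mulSn leq_addr.
Qed.

(* The numeric condition for the grid {0,1,-1} with r = 1; it fails for n = 3. *)
Lemma ternary_count n : 2 <= n -> n != 3 ->
  2 * (3 ^ n.-1 - 1) + (1 + \sum_(i < n) (3 ^ (i.+2 %/ 2) - 1)) <= 3 ^ n.
Proof.
case: n => [|[|[|[|m]]]] //= _ _; first by rewrite !big_ord_recr big_ord0.
have sum_le : \sum_(i < m.+4) (3 ^ (i.+2 %/ 2) - 1) <= 3 ^ m.+3.
  by apply: leq_trans (sum_pow_half_le m); apply: leq_sum => i _; exact: leq_subr.
have pow_gt0 : 0 < 3 ^ m.+3 by rewrite expn_gt0.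
rewrite [3 ^ m.+4]expnS; move: sum_le; move: (\sum_(i < _) _) => s; lia.
Qed.

Local Open Scope ring_scope.

Section RankOne.
Variables (K : fieldType) (n : nat).
Implicit Types (x y : 'rV[K]_n) (D : 'cV[K]_n) (V : {vspace 'M[K]_n}).

(* D witnesses that x is not V-good: D *m x is a trace-zero element of V. *)
Definition bad_witness V x D : Prop := [/\ D != 0, x *m D = 0 & D *m x \in V].

Lemma not_good_witness V x : x != 0 -> ~ good V x -> exists D, bad_witness V x D.
Proof.
move=> x0 notgood; have [u [uV /andP[ux xu] tr0]] : exists u : 'M[K]_n,
    [/\ u \in V, (u == x)%MS & \tr u = 0].
  by apply: NNPP => nou; apply: notgood; split.
have [D defu] := submxP ux; exists D; split.
- by apply: contraNneq x0 => D0; move: xu; rewrite defu D0 mul0mx submx0.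
- by rewrite [x *m D]mx11_scalar -trace_mx11 -mxtrace_mulC -defu tr0 raddf0.
- by rewrite -defu.
Qed.

Lemma rank_deficient_eigenvalue0 (A : 'M[K]_n) : (\rank A < n)%N -> eigenvalue A 0.
Proof.
move=> rA; rewrite /eigenvalue /eigenspace kermx_eq0 /row_free.
by rewrite raddf0 subr0 neq_ltn rA.
Qed.

(* Two witnesses that see each other give M in V with x *m M = y and
   y *m M = x, hence eigenvectors x + y and x - y; M has rank at most 2. *)
Lemma witness_pair_eigen V x y Dx Dy :
  bad_witness V x Dx -> bad_witness V y Dy -> y *m Dx != 0 -> x *m Dy != 0 ->
  exists2 M, M \in V & [/\ eigenvalue M 1, eigenvalue M (-1) & (\rank M <= 2)%N].
Proof.
move=> [_ xDx DxV] [_ yDy DyV] yDx0 xDy0.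
set a := (y *m Dx) 0 0; set b := (x *m Dy) 0 0.
have ya : y *m Dx = a%:M by rewrite [LHS]mx11_scalar.
have xb : x *m Dy = b%:M by rewrite [LHS]mx11_scalar.
have a0 : a != 0 by apply: contraNneq yDx0; rewrite ya => ->; rewrite raddf0.
have b0 : b != 0 by apply: contraNneq xDy0; rewrite xb => ->; rewrite raddf0.
pose M := a^-1 *: (Dx *m x) + b^-1 *: (Dy *m y).
have Mx : x *m M = y.
  by rewrite mulmxDr -!scalemxAr !mulmxA xDx xb mul0mx mul_scalar_mx
    scaler0 add0r scalerA mulVf // scale1r.
have My : y *m M = x.
  by rewrite mulmxDr -!scalemxAr !mulmxA yDy ya mul0mx mul_scalar_mx
    scaler0 addr0 scalerA mulVf // scale1r.
exists M; first by rewrite memvD // memvZ.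
split.
- apply/eigenvalueP; exists (x + y); first by rewrite mulmxDl Mx My scale1r addrC.
  apply: contraNneq yDx0 => /eqP; rewrite addrC addr_eq0 => /eqP ->.
  by rewrite mulNmx xDx oppr0.
- apply/eigenvalueP; exists (x - y); first by rewrite mulmxBl Mx My scaleN1r opprB.
  by apply: contraNneq yDx0 => /eqP; rewrite subr_eq0 => /eqP <-; rewrite xDx.
- apply: leq_trans (mxrank_add _ _) _; rewrite -[2%N]/(1 + 1)%N.
  by apply: leq_add; rewrite scalemxAl (leq_trans (mxrankM_maxr _ _)) ?rank_leq_row.
Qed.

Lemma one_neq_opp_one : (2 \notin [pchar K])%N -> (1 : K) != -1.
Proof. by apply: contra => one_opp; rewrite inE /= mulr2n addr_eq0. Qed.

Lemma witness_pair V :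
  (2 \notin [pchar K])%N -> (2 <= n)%N ->
  (forall u, u \in V -> at_most_two_eigenvalues u) ->
  (n = 2%N -> forall u, u \in V -> at_most_one_nonzero_eigenvalue u) ->
  forall x y Dx Dy, bad_witness V x Dx -> bad_witness V y Dy ->
  (y *m Dx == 0) || (x *m Dy == 0).
Proof.
move=> ch2 n2 two_eig one_eig x y Dx Dy wx wy.
apply/negPn/negP => /norP[yDx0 xDy0].
have [M MV [e1 em1 rM]] := witness_pair_eigen wx wy yDx0 xDy0.
have m11 := one_neq_opp_one ch2.
have [n_2 | n_ne2] := eqVneq n 2%N.
  have := one_eig n_2 M MV 1 (-1) (oner_neq0 K).
  by rewrite oppr_eq0 oner_eq0 => /(_ isT e1 em1) /eqP; rewrite (negPf m11).
have e0 : eigenvalue M 0.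
  by apply: rank_deficient_eigenvalue0; apply: leq_ltn_trans rM _; lia.
case: (two_eig M MV 1 (-1) 0 e1 em1 e0) => [|[]] /eqP;
  by rewrite ?oppr_eq0 ?oner_eq0 // (negPf m11).
Qed.
End RankOne.

Section Subspaces.
Variables (K : fieldType) (n : nat).

(* A vector of W is determined by \dim W suitably chosen coordinates: the
   columns of an invertible maximal minor of a basis matrix of W. *)
Lemma subspace_coordinates (W : {vspace 'rV[K]_n}) :
  exists h : 'I_(\dim W) -> 'I_n,
    {in W &, forall x y : 'rV[K]_n, (forall k, x 0 (h k) = y 0 (h k)) -> x = y}.
Proof.
pose B : 'M[K]_(\dim W, n) := \matrix_(i < \dim W) (vbasis W)`_i.
have B_span x : x \in W -> x = (\row_i coord (vbasis W) i x) *m B.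
  move=> xW; rewrite mulmx_sum_row {1}(coord_vbasis xW).
  by apply: eq_bigr => i _; rewrite rowK mxE.
have B_free : row_free B.
  apply: inj_row_free => c; rewrite mulmx_sum_row => c0; apply/rowP => i.
  have := freeP (basis_free (vbasisP W)) (fun i => c 0 i); move/(_ _ i) => -> //.
    by rewrite mxE.
  by rewrite -[RHS]c0; apply: eq_bigr => k _; rewrite rowK.
have BT_full : row_full B^T by rewrite /row_full mxrank_tr.
pose h := fullrankfun BT_full.
have C_free : row_free (colsub h B).
  have := fullrowsub_free BT_full; rewrite /row_free -mxrank_tr.
  by congr (\rank _ == _); apply/matrixP => i j; rewrite !mxE.
exists h => x y xW yW xy; rewrite (B_span x xW) (B_span y yW); congr (_ *m _).
apply: (row_free_inj C_free); rewrite !mulmx_colsub -(B_span x xW) -(B_span y yW).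
by apply/matrixP => i k; rewrite !mxE (ord1 i).
Qed.

Definition hyperplane (D : 'cV[K]_n) : {vspace 'rV[K]_n} := lker (linfun (mulmxr D)).

Lemma mem_hyperplane D x : (x \in hyperplane D) = (x *m D == 0).
Proof. by rewrite memv_ker lfunE. Qed.

Lemma dim_hyperplane D : D != 0 -> \dim (hyperplane D) = n.-1.
Proof.
move=> D0; pose f := linfun (mulmxr D : 'rV[K]_n -> 'M[K]_1).
have [j Dj0] : exists j, D j 0 != 0.
  apply/existsP; apply: contraR D0 => /existsPn Dj; apply/eqP/matrixP => i k.
  by rewrite (ord1 k) mxE; apply/eqP/negbNE.
have img1 : \dim (limg f) = 1%N.
  apply/eqP; rewrite eqn_leq lt0n dimv_eq0 andbC; apply/andP; split.
    apply: contraNneq Dj0 => f0; have := memv_img f (memvf (delta_mx 0 j)).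
    by rewrite f0 memv0 lfunE /= -rowE => /eqP/matrixP/(_ 0 0); rewrite !mxE => ->.
  by apply: leq_trans (dimvS (subvf _)) _; rewrite dimvf dim_matrix.
have := limg_ker_dim f fullv; rewrite capfv img1 dimvf dim_matrix addn1.
by move=> dim_n; rewrite -[in RHS](mul1r n) -dim_n.
Qed.

Definition avoid (Es : nat -> {vspace 'rV[K]_n}) (x : 'rV[K]_n) : bool :=
  [forall i : 'I_n, x \notin Es i.+1].

Lemma avoidP Es x : avoid Es x -> forall i, (1 <= i <= n)%N -> x \notin Es i.
Proof.
move=> /forallP x_out i /andP[i_ge1 i_le_n].
have i_lt : (i.-1 < n)%N by lia.
by have := x_out (Ordinal i_lt); rewrite /= prednK.
Qed.
End Subspaces.

Section Grid.
Variables (K : fieldType) (n t : nat) (g : 'I_t -> K).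
Hypothesis g_inj : injective g.

Definition gridpt (f : {ffun 'I_n -> 'I_t}) : 'rV[K]_n := \row_j g (f j).

Lemma gridpt_inj : injective gridpt.
Proof.
move=> f1 f2 /rowP eq_f; apply/ffunP => j; apply: g_inj.
by have := eq_f j; rewrite !mxE.
Qed.

Lemma grid_in_subspace (W : {vspace 'rV[K]_n}) :
  (#|[set f | gridpt f \in W]| <= t ^ \dim W)%N.
Proof.
have [h h_inj] := subspace_coordinates W.
pose p (f : {ffun 'I_n -> 'I_t}) : {ffun 'I_(\dim W) -> 'I_t} := [ffun k => f (h k)].
have p_inj : {in [set f | gridpt f \in W] &, injective p}.
  move=> f1 f2; rewrite !inE => f1W f2W /ffunP eq_p.
  apply: gridpt_inj; apply: h_inj => // k.
  by rewrite !mxE; have := eq_p k; rewrite !ffunE => ->.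
rewrite -(card_in_imset p_inj) (leq_trans (max_card _)) //.
by rewrite card_ffun !card_ord.
Qed.

Variable z : 'I_t.
Hypothesis g_z : g z = 0.

Let f0 : {ffun 'I_n -> 'I_t} := [ffun => z].

Lemma gridpt0 : gridpt f0 = 0.
Proof. by apply/rowP => j; rewrite !mxE ffunE g_z. Qed.

(* Grid points inside the complex: the origin, plus the nonzero ones of each E_i. *)
Lemma grid_meets_complex (Es : nat -> {vspace 'rV[K]_n}) :
  (#|[set f | ~~ avoid Es (gridpt f)]|
     <= 1 + \sum_(i < n) (t ^ \dim (Es i.+1) - 1))%N.
Proof.
pose A i := [set f | gridpt f \in Es i.+1].
have sub : [set f | ~~ avoid Es (gridpt f)] \subset f0 |: \bigcup_(i < n) (A i :\ f0).
  apply/subsetP => f; rewrite !inE negb_forall => /existsP[i]; rewrite negbK => fi.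
  have [//|f_neq0] := eqVneq f f0.
  by apply/bigcupP; exists i; rewrite // !inE f_neq0.
apply: leq_trans (subset_leq_card sub) _.
rewrite (leq_trans (leq_card_setU _ _).1) // cards1 leq_add2l.
apply: leq_trans (card_bigcup_le _ _ _) _; apply: leq_sum => i _.
have := grid_in_subspace (Es i.+1); rewrite (cardsD1 f0) inE gridpt0 mem0v add1n.
by move/(leq_sub2r 1); rewrite subn1.
Qed.

Definition complex_kernel (Es : nat -> {vspace 'rV[K]_n}) (D : 'cV[K]_n) :=
  [set f | (gridpt f *m D == 0) && ~~ avoid Es (gridpt f)].

Lemma complex_kernel_zero Es D : (0 < n)%N -> (1 <= #|complex_kernel Es D|)%N.
Proof.
move=> n_gt0; apply/card_gt0P; exists f0; rewrite !inE gridpt0 mul0mx eqxx /=.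
by apply/forallPn; exists (Ordinal n_gt0); rewrite negbK mem0v.
Qed.

(* If the grid is all of K (char K <> 2) and some E_i is a plane, then the line
   E_i \cap hyperplane D provides the three grid points 0, v and -v. *)
Lemma complex_kernel_plane Es D (i : 'I_n) :
  (forall a, exists k, g k = a) -> (2 \notin [pchar K])%N -> D != 0 ->
  (2 <= \dim (Es i.+1))%N -> (3 <= #|complex_kernel Es D|)%N.
Proof.
move=> g_surj ch2 D0 dimE.
have cap_gt0 : (0 < \dim (Es i.+1 :&: hyperplane D))%N.
  have := dimv_sum_cap (Es i.+1) (hyperplane D); rewrite dim_hyperplane //.
  have : (\dim (Es i.+1 + hyperplane D) <= n)%N.
    by apply: leq_trans (dimvS (subvf _)) _; rewrite dimvf dim_matrix mul1r.
  by have := ltn_ord i; lia.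
set v := vpick (Es i.+1 :&: hyperplane D).
have v_neq0 : v != 0 by rewrite vpick0 -dimv_eq0 -lt0n.
have /andP[vE vH] : (v \in Es i.+1) && (v \in hyperplane D).
  by rewrite -memv_cap memv_pick.
have v_neq_opp : v != - v.
  rewrite -addr_eq0 -mulr2n -scaler_nat scaler_eq0 negb_or v_neq0 andbT.
  by apply: contra ch2 => two0; rewrite inE.
have [coord coordK] := ClassicalEpsilon.choice _ g_surj.
pose pt (y : 'rV[K]_n) : {ffun 'I_n -> 'I_t} := [ffun j => coord (y 0 j)].
have ptK y : gridpt (pt y) = y by apply/rowP => j; rewrite !mxE ffunE coordK.
have pt_inj : injective pt by move=> y1 y2 eq_pt; rewrite -(ptK y1) eq_pt ptK.
have in_kernel y : y \in Es i.+1 -> y \in hyperplane D -> pt y \in complex_kernel Es D.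
  move=> yE yH; rewrite inE ptK -mem_hyperplane yH /=.
  by apply/forallPn; exists i; rewrite negbK.
have sub : [set pt 0; pt v; pt (- v)] \subset complex_kernel Es D.
  apply/subsetP => f /setUP[/set2P[] | /set1P] ->;
    by apply: in_kernel; rewrite ?mem0v ?memvN.
apply: leq_trans (subset_leq_card sub).
rewrite -setUA cardsU1 cards2 !inE !(inj_eq pt_inj) negb_or.
by rewrite eq_sym v_neq0 eq_sym oppr_eq0 v_neq0 v_neq_opp.
Qed.

Lemma hyperplane_outside_complex Es (D : 'cV[K]_n) : D != 0 ->
  (#|[set f | (gridpt f *m D == 0%R) && avoid Es (gridpt f)]|
     + #|complex_kernel Es D| <= t ^ n.-1)%N.
Proof.
move=> D0; have := grid_in_subspace (hyperplane D); rewrite dim_hyperplane //.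
rewrite -(cardsID [set f | avoid Es (gridpt f)]); congr (_ + _ <= _)%N.
  by apply: eq_card => f; rewrite !inE mem_hyperplane.
by apply: eq_card => f; rewrite /complex_kernel !inE mem_hyperplane andbC.
Qed.

Lemma grid_outside_complex Es : two_complex Es ->
  (t ^ n <= #|[set f | avoid Es (gridpt f)]|
            + (1 + \sum_(i < n) (t ^ (i.+2 %/ 2) - 1)))%N.
Proof.
move=> complexE; have := cardsC [set f | avoid Es (gridpt f)].
rewrite card_ffun !card_ord => <-; rewrite leq_add2l.
have -> : (\sum_(i < n) (t ^ (i.+2 %/ 2) - 1) =
           \sum_(i < n) (t ^ \dim (Es i.+1) - 1))%N.
  by apply: eq_bigr => i _; rewrite complexE ?addn1 ?ltn_ord.
apply: leq_trans (grid_meets_complex Es); apply: subset_leq_card.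
by apply/subsetP => f; rewrite !inE.
Qed.

Variable V : {vspace 'M[K]_n}.
Hypothesis witness_pair : forall x y Dx Dy,
  bad_witness V x Dx -> bad_witness V y Dy -> (y *m Dx == 0) || (x *m Dy == 0).

(* The counting argument: if every grid point outside the complex were bad,
   the relation "f' lies in the hyperplane of the witness of f" would be total
   on them (witness_pair), contradicting total_relation_outdegree. *)
Lemma exists_good_grid_point (Es : nat -> {vspace 'rV[K]_n}) (r : nat) :
  (0 < n)%N -> two_complex Es ->
  (forall D : 'cV_n, D != 0 -> (r <= #|complex_kernel Es D|)%N) ->
  (r < t ^ n.-1)%N ->
  (2 * (t ^ n.-1 - r) + (1 + \sum_(i < n) (t ^ (i.+2 %/ 2) - 1)) <= t ^ n)%N ->
  exists x, good V x /\ avoid Es x.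
Proof.
move=> n_gt0 complexE kernel_r r_lt count; apply: NNPP => no_good.
have avoid_witness x : exists D, avoid Es x -> bad_witness V x D.
  case ax: (avoid Es x); last by exists 0.
  have x_neq0 : x != 0.
    apply: contraTneq ax => ->; apply/forallPn.
    by exists (Ordinal n_gt0); rewrite negbK mem0v.
  have [D wD] : exists D, bad_witness V x D.
    by apply: (not_good_witness x_neq0) => gx; apply: no_good; exists x.
  by exists D.
have [D DP] := ClassicalEpsilon.choice _ avoid_witness.
pose S := [set f | avoid Es (gridpt f)].
pose R : rel {ffun 'I_n -> 'I_t} := fun f f' => gridpt f' *m D (gridpt f) == 0.
have R_total : {in S &, forall f f', R f f' || R f' f}.
  by move=> f f'; rewrite !inE => fS f'S; apply: witness_pair; [apply: DP | apply: DP].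
have outdeg : {in S, forall f, #|[set f' in S | R f f']| <= t ^ n.-1 - r}%N.
  move=> f; rewrite inE => fS; have [D0 _ _] := DP _ fS.
  have := hyperplane_outside_complex Es D0; have := kernel_r _ D0.
  have -> : [set f' in S | R f f'] =
            [set f' | (gridpt f' *m D (gridpt f) == 0) && avoid Es (gridpt f')].
    by apply/setP => f'; rewrite !inE andbC.
  lia.
have S_big : (2 * (t ^ n.-1 - r) <= #|S|)%N.
  have := grid_outside_complex complexE; rewrite -/S; move: count.
  by move: (\sum_(i < n) _)%N => s; lia.
have S_neq0 : S != set0 by rewrite -card_gt0; lia.
by have := total_relation_outdegree R_total outdeg S_neq0; lia.
Qed.

(* The count with r = 1, the origin being a grid point of every hyperplane. *)
Lemma exists_good_grid_point1 (Es : nat -> {vspace 'rV[K]_n}) :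
  (0 < n)%N -> two_complex Es -> (1 < t ^ n.-1)%N ->
  (2 * (t ^ n.-1 - 1) + (1 + \sum_(i < n) (t ^ (i.+2 %/ 2) - 1)) <= t ^ n)%N ->
  exists x, good V x /\ avoid Es x.
Proof.
move=> n_gt0 complexE r_lt count.
apply: (exists_good_grid_point (r := 1) (n_gt0) complexE) r_lt count => D _.
exact: complex_kernel_zero.
Qed.
End Grid.

Unset Implicit Arguments.

Definition seq_grid {K : fieldType} (s : seq K) : 'I_(size s) -> K := fun i => s`_i.

Lemma seq_grid_inj {K : fieldType} {s : seq K} : uniq s -> injective (seq_grid s).
Proof. by move=> s_uniq i j /eqP; rewrite nth_uniq // => /eqP /val_inj. Qed.

Theorem mainTheorem9 (K : fieldType) (n : nat) (V : {vspace 'M[K]_n})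
  (Es : nat -> {vspace 'rV[K]_n}) :
  (2 \notin [pchar K])%N ->
  (2 <= n)%N ->
  (forall u, u \in V -> at_most_two_eigenvalues u) ->
  (n = 2%N -> forall u, u \in V -> at_most_one_nonzero_eigenvalue u) ->
  two_complex Es ->
  exists x : 'rV[K]_n, good V x /\ (forall i, (1 <= i <= n)%N -> x \notin Es i).
Proof.
move=> ch2 n2 two_eig one_eig complexE.
have n_gt0 : (0 < n)%N by lia.
have pairs := witness_pair ch2 n2 two_eig one_eig.
suff [x [x_good x_out]] : exists x, good V x /\ avoid Es x.
  by exists x; split; [|exact: avoidP].
have s3_uniq : uniq [:: 0; 1; -1 : K].
  by rewrite /= !inE negb_or eq_sym oner_eq0 eq_sym oppr_eq0 oner_eq0 one_neq_opp_one.
have grid_good s (z : 'I_(size s)) (s_uniq : uniq s) (s_z : s`_z = 0) r :=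
  exists_good_grid_point (seq_grid_inj s_uniq) s_z pairs (r := r) n_gt0 complexE.
have grid_good1 s (z : 'I_(size s)) (s_uniq : uniq s) (s_z : s`_z = 0) :=
  exists_good_grid_point1 (seq_grid_inj s_uniq) s_z pairs n_gt0 complexE.
have [n3 | n_ne3] := eqVneq n 3%N; last first.
  apply: (grid_good1 [:: 0; 1; -1] ord0 s3_uniq erefl); last exact: ternary_count.
  by rewrite -[1%N](expn0 3) ltn_exp2l //; lia.
subst n; have [[a a_new] | no_new] := classic (exists a : K, a \notin [:: 0; 1; -1]).
  have s4_uniq : uniq [:: 0; 1; -1; a].
    by rewrite -[[:: 0; 1; -1; a]]/(rcons [:: 0; 1; -1] a) rcons_uniq a_new s3_uniq.
  apply: (grid_good1 [:: 0; 1; -1; a] ord0 s4_uniq erefl) => //.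
  by rewrite !big_ord_recr big_ord0.
(* n = 3 and K = {0,1,-1}: hyperplanes meet the plane E_3 in three points. *)
have K3 (b : K) : exists k : 'I_(size [:: 0; 1; -1]), seq_grid [:: 0; 1; -1] k = b.
  have /(nthP 0)[k k_lt s_k] : b \in [:: 0; 1; -1].
    by apply/negPn/negP => b_new; apply: no_new; exists b.
  by exists (Ordinal k_lt).
apply: (grid_good [:: 0; 1; -1] ord0 s3_uniq erefl 3%N) => //.
  by move=> D D0; apply: (complex_kernel_plane (i := ord_max)); rewrite ?complexE.
by rewrite !big_ord_recr big_ord0.
Qed.
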